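(* Let $G=(V,E)$ be a connected simple graph with a set-valued metric $\Omega(-,-)$ taking values in subsets of a finite set $\Omega$, and let $v\mapsto -v$ be an involution on $V$ which is both equivariant and a graph automorphism of $G$. If $V$ contains an $\Omega$-accessible vertex $x_0$, then the diameter of $G$ is exactly $|\Omega|$.
   Context: For a connected simple graph $G=(V,E)$ and a set $\Omega$, a set-valued metric on $G$ is a function $\Omega(-,-):V\times V\to 2^{\Omega}$ such that $\Omega(x,y)=\Omega(y,x)$ for all $x,y$; $|\Omega(x,y)|=1$ whenever $\{x,y\}\in E$; and $\Omega(x,z)=\Omega(x,y)\triangle\Omega(y,z)$ for all $x,y,z$, where $\triangle$ is symmetric difference. An involution $x\mapsto -x$ on $V$ is equivariant if $\Omega(x,-y)=\Omega\setminus\Omega(x,y)$ for all $x,y$; it is a graph automorphism if it maps edges to edges. A vertex $x_0$ is $\Omega$-accessible if $d_G(x_0,y)=|\Omega(x_0,y)|$ for every $y\in V$, where $d_G$ is graph distance. *)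

From mathcomp Require Import all_boot.
Set Implicit Arguments. Unset Strict Implicit. Unset Printing Implicit Defensive.

Definition simple_graph (V : Type) (adj : V -> V -> Prop) : Prop :=
  (forall x y, adj x y -> adj y x) /\ (forall x, ~ adj x x).

Inductive walk (V : Type) (adj : V -> V -> Prop) : V -> V -> nat -> Prop :=
| walk0 x : walk adj x x 0
| walkS x y z n : adj x y -> walk adj y z n -> walk adj x z n.+1.

Definition connected (V : Type) (adj : V -> V -> Prop) : Prop :=
  forall x y, exists n, walk adj x y n.

Definition gdist (V : Type) (adj : V -> V -> Prop) (x y : V) (n : nat) : Prop :=
  walk adj x y n /\ forall m, walk adj x y m -> n <= m.

Definition diameter_is (V : Type) (adj : V -> V -> Prop) (D : nat) : Prop :=
  (forall x y n, gdist adj x y n -> n <= D) /\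
  (exists x y, gdist adj x y D).

Definition set_valued_metric (V : Type) (O : finType) (adj : V -> V -> Prop)
    (Om : V -> V -> {set O}) : Prop :=
  (forall x y, Om x y = Om y x) /\
  (forall x y, adj x y -> #|Om x y| = 1) /\
  (forall x y z, Om x z = (Om x y :\: Om y z) :|: (Om y z :\: Om x y)).

Definition involution (V : Type) (neg : V -> V) : Prop :=
  forall x, neg (neg x) = x.

Definition equivariant (V : Type) (O : finType) (Om : V -> V -> {set O})
    (neg : V -> V) : Prop :=
  forall x y, Om x (neg y) = ~: Om x y.

Definition graph_automorphism (V : Type) (adj : V -> V -> Prop) (neg : V -> V) : Prop :=
  forall x y, adj x y -> adj (neg x) (neg y).

Definition accessible (V : Type) (O : finType) (adj : V -> V -> Prop)
    (Om : V -> V -> {set O}) (x0 : V) : Prop :=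
  forall y, gdist adj x0 y #|Om x0 y|.

From mathcomp Require Import all_boot.
Set Implicit Arguments. Unset Strict Implicit.

(* Since -x0 is again accessible, with |Ω(-x0, y)| = |Ω| - |Ω(x0, y)|, any two
   vertices x, y are joined both by a walk through x0 and by a walk through
   -x0; the two lengths add up to 2|Ω|, so d(x, y) <= |Ω|.  The bound is
   attained by the pair (x0, -x0) since Ω(x0, -x0) = Ω. *)

Section Walks.

Variables (V : Type) (adj : V -> V -> Prop).

Lemma walk_cat x y z m n :
  walk adj x y m -> walk adj y z n -> walk adj x z (m + n).
Proof.
elim=> [//|a b c k Hab _ IH] H; rewrite addSn; exact: walkS (IH H).
Qed.

Lemma walk_rev x y n :
  (forall x y, adj x y -> adj y x) -> walk adj x y n -> walk adj y x n.
Proof.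
move=> adj_sym; elim=> [a|a b c k Hab _ IH]; first exact: walk0.
rewrite -addn1; apply: walk_cat IH _; exact: walkS (adj_sym _ _ Hab) (walk0 _ _).
Qed.

Lemma walk_map f x y n :
  (forall x y, adj x y -> adj (f x) (f y)) ->
  walk adj x y n -> walk adj (f x) (f y) n.
Proof.
move=> f_hom; elim=> [a|a b c k Hab _ IH]; first exact: walk0.
exact: walkS (f_hom _ _ Hab) IH.
Qed.

Lemma gdist_le_walks x y z n a b :
  (forall x y, adj x y -> adj y x) ->
  gdist adj x y n -> walk adj z x a -> walk adj z y b -> n <= a + b.
Proof.
by move=> adj_sym [_ n_min] Wx Wy; apply/n_min/(walk_cat (walk_rev adj_sym Wx)).
Qed.

End Walks.

Lemma Om_refl (V : Type) (O : finType) (adj : V -> V -> Prop)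
    (Om : V -> V -> {set O}) x :
  set_valued_metric adj Om -> Om x x = set0.
Proof. by case=> _ [_ Om_tri]; rewrite (Om_tri x x x) setDv setU0. Qed.

Lemma card_Om_neg (V : Type) (O : finType) (Om : V -> V -> {set O})
    (neg : V -> V) x y :
  equivariant Om neg -> #|Om x (neg y)| = #|O| - #|Om x y|.
Proof. by move=> Om_neg; rewrite Om_neg cardsCs setCK. Qed.

Section AccessibleVertex.

Variables (V : Type) (O : finType) (adj : V -> V -> Prop).
Variables (Om : V -> V -> {set O}) (neg : V -> V) (x0 : V).
Hypotheses (adj_sym : forall x y, adj x y -> adj y x)
  (neg_invol : involution neg) (Om_neg : equivariant Om neg)
  (neg_hom : graph_automorphism adj neg) (x0_acc : accessible adj Om x0).

Lemma walk_from_neg y : walk adj (neg x0) y (#|O| - #|Om x0 y|).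
Proof.
rewrite -(card_Om_neg x0 y Om_neg).
by have := walk_map neg_hom (x0_acc (neg y)).1; rewrite neg_invol.
Qed.

Lemma gdist_le_card x y n : gdist adj x y n -> n <= #|O|.
Proof.
move=> dxy.
have le_O z : #|Om x0 z| <= #|O| by apply: max_card.
have via_x0 := gdist_le_walks adj_sym dxy (x0_acc x).1 (x0_acc y).1.
have via_neg := gdist_le_walks adj_sym dxy (walk_from_neg x) (walk_from_neg y).
rewrite -leq_double -!addnn.
apply: leq_trans (leq_add via_x0 via_neg) _.
by rewrite addnACA subnKC // subnKC.
Qed.

Lemma gdist_neg (Om_metric : set_valued_metric adj Om) :
  gdist adj x0 (neg x0) #|O|.
Proof.
have := x0_acc (neg x0).
by rewrite (card_Om_neg x0 x0 Om_neg) (Om_refl x0 Om_metric) cards0 subn0.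
Qed.

End AccessibleVertex.

Theorem proposition3p12 (V : Type) (O : finType) (adj : V -> V -> Prop)
    (Om : V -> V -> {set O}) (neg : V -> V) :
  simple_graph adj -> connected adj ->
  set_valued_metric adj Om ->
  involution neg -> equivariant Om neg -> graph_automorphism adj neg ->
  (exists x0, accessible adj Om x0) ->
  diameter_is adj #|O|.
Proof.
move=> [adj_sym _] _ Om_metric neg_invol Om_neg neg_hom [x0 x0_acc].
split; first exact: gdist_le_card adj_sym neg_invol Om_neg neg_hom x0_acc.
by exists x0, (neg x0); apply: gdist_neg.
Qed.
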